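(* Let $d_1,\dots,d_n$ be positive integers with $d=\sum_id_i\ge2$, and let $(p_1,p_2)$ be either $(s,0)$ with $s\in[0,1]$ or $(1,s)$ with $s\in(0,1]$. Then the unique pair $(\lambda,y)\in\mathbb{R}\times C^2([0,1];\mathbb{R}^n)$ satisfying $$p_1\sum_{i=1}^nd_i\Big(-y_i'\sum_{k=1}^nd_ky_k'+y_i'^2\Big)\Big|_{r=0}=(d-1)\lambda,$$ $$-p_2\,y_i'\sum_{k=1}^nd_ky_k'-y_i''=p_2\lambda\ \text{ on }[0,1]\ (i=1,\dots,n),\qquad y(0)=0,\quad y(1)=0,$$ is $(\lambda,y)=(0,0)$.
   Context: This is the system obtained, for parameters $t\in[0,1/2]$, from a homotopy with $p_1(t)=\min(\max(4t,0),1)$, $p_2(t)=\min(\max(4t-1,0),1)$, $p_3=p_4=0$; the pairs $(p_1(t),p_2(t))$ for $t\in[0,1/2]$ are exactly those listed. *)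

From Stdlib Require Import Reals Lra List.
From Coquelicot Require Import Coquelicot.
Open Scope R_scope.

Definition sumR (n : nat) (f : nat -> R) : R :=
  fold_right Rplus 0 (map f (seq 0 n)).

Definition sumN (n : nat) (f : nat -> nat) : nat :=
  fold_right Nat.add 0%nat (map f (seq 0 n)).

Definition I01 (t : R) : Prop := 0 <= t <= 1.

Definition deriv_on01 (f f' : R -> R) : Prop :=
  forall x, I01 x ->
    filterlim (fun t => (f t - f x) / (t - x))
      (within (fun t => I01 t /\ t <> x) (locally x)) (locally (f' x)).

Definition cont_on01 (f : R -> R) : Prop :=
  forall x, I01 x -> filterlim f (within I01 (locally x)) (locally (f x)).

Definition C2_01 (f f1 f2 : R -> R) : Prop :=
  deriv_on01 f f1 /\ deriv_on01 f1 f2 /\ cont_on01 f2.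

Definition is_solution (n : nat) (d : nat -> nat) (p1 p2 lam : R)
    (y : nat -> R -> R) : Prop :=
  exists y1 y2 : nat -> R -> R,
    (forall i, (i < n)%nat -> C2_01 (y i) (y1 i) (y2 i)) /\
    p1 * sumR n (fun i => INR (d i) *
          (- y1 i 0 * sumR n (fun k => INR (d k) * y1 k 0) + (y1 i 0) ^ 2))
      = (INR (sumN n d) - 1) * lam /\
    (forall i r, (i < n)%nat -> I01 r ->
       - p2 * y1 i r * sumR n (fun k => INR (d k) * y1 k r) - y2 i r = p2 * lam) /\
    (forall i, (i < n)%nat -> y i 0 = 0 /\ y i 1 = 0).

From Stdlib Require Import Reals Lra Lia List.
From Coquelicot Require Import Coquelicot.
Open Scope R_scope.

(* Subtracting the equations for indices i and 0 gives a homogeneous linear equation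
   for y_i' - y_0' with coefficient p2 * sum_k d_k y_k'.  As y_i - y_0 vanishes at both
   ends, Rolle makes y_i' - y_0' vanish somewhere, hence everywhere (integrating factor),
   so all components coincide.  The boundary condition at 0 then forces
   lam = - p1 d c^2 with c = y_0'(0); since p1 p2 = p2, the slope v = y_0' solves
   v' = - p2 d (v - c) (v + c) with v(0) = c, so v = c, y_0 = c r, and y_0(1) = 0 gives
   c = 0. *)

Lemma ball_Rabs (x e y : R) : ball x e y <-> Rabs (y - x) < e.
Proof. reflexivity. Qed.

Definition clamp01 (t : R) : R := Rmax 0 (Rmin 1 t).

Definition ext01 (f : R -> R) (t : R) : R := f (clamp01 t).

Lemma clamp01_I01 (t : R) : I01 (clamp01 t).
Proof. unfold clamp01, I01, Rmax, Rmin; repeat destruct Rle_dec; lra. Qed.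

Lemma clamp01_id (t : R) : I01 t -> clamp01 t = t.
Proof. unfold clamp01, I01, Rmax, Rmin; repeat destruct Rle_dec; lra. Qed.

Lemma clamp01_dist (t u : R) : Rabs (clamp01 t - clamp01 u) <= Rabs (t - u).
Proof.
  unfold clamp01, Rmax, Rmin; repeat destruct Rle_dec;
    unfold Rabs; repeat destruct Rcase_abs; lra.
Qed.

Lemma I01_0 : I01 0.
Proof. unfold I01; lra. Qed.

Lemma I01_1 : I01 1.
Proof. unfold I01; lra. Qed.

Lemma ext01_id (f : R -> R) (t : R) : I01 t -> ext01 f t = f t.
Proof. intros Ht. unfold ext01. rewrite clamp01_id by exact Ht. reflexivity. Qed.

Lemma deriv_on01_quotient (f f' : R -> R) (x eps : R) :
  deriv_on01 f f' -> I01 x -> 0 < eps ->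
  exists delta, 0 < delta /\ forall t, I01 t -> t <> x -> Rabs (t - x) < delta ->
    Rabs ((f t - f x) / (t - x) - f' x) < eps.
Proof.
  intros Hf Hx Heps.
  destruct (proj1 (filterlim_locally _ _) (Hf x Hx) (mkposreal eps Heps)) as [delta Hdelta].
  exists delta; split; [apply cond_pos |].
  intros t Ht Htx Hdist. apply Hdelta; [exact Hdist | tauto].
Qed.

Lemma deriv_on01_cont (f f' : R -> R) : deriv_on01 f f' -> cont_on01 f.
Proof.
  intros Hf x Hx. apply filterlim_locally. intros eps.
  destruct (deriv_on01_quotient f f' x 1 Hf Hx Rlt_0_1) as [delta [Hdelta Hq]].
  set (M := Rabs (f' x) + 1).
  assert (HM : 0 < M) by (pose proof (Rabs_pos (f' x)); unfold M; lra).
  assert (Hr : 0 < Rmin delta (eps / M)).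
  { apply Rmin_pos; [exact Hdelta | apply Rdiv_lt_0_compat; [apply cond_pos | exact HM]]. }
  exists (mkposreal _ Hr). intros t Hdist Ht. apply ball_Rabs.
  rewrite ball_Rabs in Hdist; simpl in Hdist.
  pose proof (Rmin_l delta (eps / M)). pose proof (Rmin_r delta (eps / M)).
  destruct (Req_dec t x) as [-> | Htx].
  { rewrite Rminus_diag, Rabs_R0. apply cond_pos. }
  pose proof (Hq t Ht Htx ltac:(lra)) as Hqt.
  set (q := (f t - f x) / (t - x)) in Hqt.
  assert (Hq_bound : Rabs q < M).
  { pose proof (Rabs_triang_inv q (f' x)). unfold M; lra. }
  replace (f t - f x) with (q * (t - x)) by (unfold q; field; lra).
  rewrite Rabs_mult.
  assert (Hepsm : M * (eps / M) = eps) by (field; lra).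
  assert (Hd : Rabs (t - x) < eps / M) by lra.
  apply Rle_lt_trans with (M * Rabs (t - x)).
  - apply Rmult_le_compat_r; [apply Rabs_pos | lra].
  - rewrite <- Hepsm. apply Rmult_lt_compat_l; lra.
Qed.

Lemma cont_on01_ext01 (f : R -> R) (x : R) : cont_on01 f -> continuous (ext01 f) x.
Proof.
  intros Hf. apply (filterlim_comp _ _ _ clamp01 f _ (within I01 (locally (clamp01 x)))).
  - intros P [eps HP]. exists eps. intros t Ht. apply HP; [| apply clamp01_I01].
    rewrite ball_Rabs in Ht |- *. pose proof (clamp01_dist t x). lra.
  - apply Hf, clamp01_I01.
Qed.

Lemma deriv_on01_ext01 (f f' : R -> R) (x : R) :
  deriv_on01 f f' -> 0 < x < 1 -> is_derive (ext01 f) x (f' x).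
Proof.
  intros Hf Hx. apply is_derive_Reals. intros eps Heps.
  destruct (deriv_on01_quotient f f' x eps Hf ltac:(unfold I01; lra) Heps)
    as [delta [Hdelta Hq]].
  assert (Hr : 0 < Rmin delta (Rmin x (1 - x))) by (repeat apply Rmin_pos; lra).
  exists (mkposreal _ Hr). intros h Hh Hdist; simpl in Hdist.
  pose proof (Rmin_l delta (Rmin x (1 - x))). pose proof (Rmin_r delta (Rmin x (1 - x))).
  pose proof (Rmin_l x (1 - x)). pose proof (Rmin_r x (1 - x)).
  pose proof (Rabs_def2 h (Rmin x (1 - x)) ltac:(lra)).
  unfold ext01. rewrite !clamp01_id by (unfold I01; lra).
  replace h with (x + h - x) at 2 by ring.
  apply Hq; [unfold I01; lra | lra | replace (x + h - x) with h by ring; lra].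
Qed.

(* Continuity on all of [R] is what [MVT_gen] asks for; a function given on [0,1] is
   brought into this form by [ext01]. *)
Definition diff01 (f f' : R -> R) : Prop :=
  (forall x, continuous f x) /\ (forall x, 0 < x < 1 -> is_derive f x (f' x)).

Lemma diff01_ext01 (f f' : R -> R) : deriv_on01 f f' -> diff01 (ext01 f) f'.
Proof.
  intros Hf; split.
  - intros x. apply cont_on01_ext01, (deriv_on01_cont f f' Hf).
  - intros x. apply deriv_on01_ext01, Hf.
Qed.

Lemma diff01_eq (f f' g' : R -> R) :
  diff01 f f' -> (forall x, 0 < x < 1 -> f' x = g' x) -> diff01 f g'.
Proof.
  intros [Hc Hd] Heq; split; [exact Hc |].
  intros x Hx. rewrite <- Heq by exact Hx. auto.
Qed.

Lemma diff01_const (a : R) : diff01 (fun _ => a) (fun _ => 0).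
Proof. split; intros x; [apply continuous_const | intros _; apply (is_derive_const a x)]. Qed.

Lemma diff01_id : diff01 (fun t => t) (fun _ => 1).
Proof. split; intros x; [apply continuous_id | intros _; apply (is_derive_id x)]. Qed.

Lemma diff01_plus (f f' g g' : R -> R) :
  diff01 f f' -> diff01 g g' -> diff01 (fun t => f t + g t) (fun t => f' t + g' t).
Proof.
  intros [Hfc Hfd] [Hgc Hgd]; split; intros x.
  - apply (continuous_plus f g x); auto.
  - intros Hx. apply (is_derive_plus f g x); auto.
Qed.

Lemma diff01_minus (f f' g g' : R -> R) :
  diff01 f f' -> diff01 g g' -> diff01 (fun t => f t - g t) (fun t => f' t - g' t).
Proof.
  intros [Hfc Hfd] [Hgc Hgd]; split; intros x.
  - apply (continuous_minus f g x); auto.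
  - intros Hx. apply (is_derive_minus f g x); auto.
Qed.

Lemma diff01_mult (f f' g g' : R -> R) :
  diff01 f f' -> diff01 g g' ->
  diff01 (fun t => f t * g t) (fun t => f' t * g t + f t * g' t).
Proof.
  intros [Hfc Hfd] [Hgc Hgd]; split; intros x.
  - apply (continuous_mult f g x); auto.
  - intros Hx. apply (is_derive_mult f g x); auto. apply Rmult_comm.
Qed.

Lemma diff01_scal (k : R) (f f' : R -> R) :
  diff01 f f' -> diff01 (fun t => k * f t) (fun t => k * f' t).
Proof.
  intros Hf. apply (diff01_eq _ (fun t => 0 * f t + k * f' t)).
  - apply diff01_mult; [apply diff01_const | exact Hf].
  - intros; ring.
Qed.

Lemma diff01_exp (f f' : R -> R) :
  diff01 f f' -> diff01 (fun t => exp (f t)) (fun t => f' t * exp (f t)).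
Proof.
  intros [Hfc Hfd]; split; intros x.
  - apply continuous_exp_comp, Hfc.
  - intros Hx. apply (is_derive_comp exp f x (exp (f x)) (f' x)); [apply is_derive_exp | auto].
Qed.

Lemma diff01_sumR (n : nat) (F F' : nat -> R -> R) :
  (forall k, (k < n)%nat -> diff01 (F k) (F' k)) ->
  diff01 (fun t => sumR n (fun k => F k t)) (fun t => sumR n (fun k => F' k t)).
Proof.
  intros HF. assert (HF' : forall k, In k (seq 0 n) -> diff01 (F k) (F' k)).
  { intros k Hk. apply in_seq in Hk. apply HF. lia. }
  unfold sumR. clear HF. induction (seq 0 n) as [| k l IH]; simpl.
  - apply diff01_const.
  - apply diff01_plus; [apply HF'; simpl; auto | apply IH; intros; apply HF'; simpl; auto].
Qed.

Lemma diff01_MVT (f f' : R -> R) (a b : R) :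
  diff01 f f' -> 0 <= a <= b -> b <= 1 ->
  exists c, a <= c <= b /\ f b - f a = f' c * (b - a).
Proof.
  intros [Hc Hd] Hab Hb.
  assert (Hmvt := MVT_gen f a b f'); simpl in Hmvt.
  rewrite Rmin_left, Rmax_right in Hmvt by lra.
  apply Hmvt.
  - intros x Hx. apply Hd. lra.
  - intros x _. apply continuity_pt_filterlim, Hc.
Qed.

Lemma diff01_deriv0_eq (f : R -> R) (s t : R) :
  diff01 f (fun _ => 0) -> I01 s -> I01 t -> f s = f t.
Proof.
  intros Hf Hs Ht.
  assert (Hf0 : forall u, I01 u -> f u = f 0).
  { intros u Hu. destruct (diff01_MVT f _ 0 u Hf ltac:(unfold I01 in *; lra) (proj2 Hu))
      as [c [_ Hc]].
    lra. }
  rewrite (Hf0 s Hs), (Hf0 t Ht). reflexivity.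
Qed.

Lemma diff01_Rolle (f f' : R -> R) :
  diff01 f f' -> f 0 = f 1 -> exists c, I01 c /\ f' c = 0.
Proof.
  intros Hf Hf01. destruct (diff01_MVT f f' 0 1 Hf ltac:(lra) ltac:(lra)) as [c [Hc Hmvt]].
  exists c. split; [exact Hc | lra].
Qed.

(* Integrating factor: [w * exp A] has derivative [(w' + a w) * exp A = 0]. *)
Lemma diff01_linear_ode_zero (w w' A a : R -> R) (t0 : R) :
  diff01 w w' -> diff01 A a -> (forall x, 0 < x < 1 -> w' x = - a x * w x) ->
  I01 t0 -> w t0 = 0 -> forall t, I01 t -> w t = 0.
Proof.
  intros Hw HA Hode Ht0 Hw0 t Ht.
  assert (HG : diff01 (fun t => w t * exp (A t)) (fun _ => 0)).
  { apply (diff01_eq _ _ _ (diff01_mult _ _ _ _ Hw (diff01_exp _ _ HA))).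
    intros x Hx. rewrite Hode by exact Hx. ring. }
  pose proof (diff01_deriv0_eq _ t t0 HG Ht Ht0) as Heq.
  cbv beta in Heq. rewrite Hw0, Rmult_0_l in Heq.
  apply Rmult_integral in Heq as [-> | Hexp]; [reflexivity |].
  pose proof (exp_pos (A t)). lra.
Qed.

Lemma sumR_ext (n : nat) (f g : nat -> R) :
  (forall k, (k < n)%nat -> f k = g k) -> sumR n f = sumR n g.
Proof.
  intros Hfg. unfold sumR. f_equal. apply map_ext_in.
  intros k Hk. apply in_seq in Hk. apply Hfg. lia.
Qed.

Lemma sumR_weights (n : nat) (d : nat -> nat) (a : R) :
  sumR n (fun k => INR (d k) * a) = INR (sumN n d) * a.
Proof.
  unfold sumR, sumN. induction (seq 0 n) as [| k l IH]; simpl; [ring |].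
  rewrite plus_INR, IH. ring.
Qed.

Lemma deriv_on01_const (a : R) : deriv_on01 (fun _ => a) (fun _ => 0).
Proof.
  intros x _. apply (filterlim_ext (fun _ => 0)); [intros t; unfold Rdiv; ring |].
  apply filterlim_const.
Qed.

Lemma zero_is_solution (n : nat) (d : nat -> nat) (p1 p2 : R) :
  is_solution n d p1 p2 0 (fun _ _ => 0).
Proof.
  exists (fun _ _ => 0), (fun _ _ => 0). repeat split; intros.
  - apply deriv_on01_const.
  - apply deriv_on01_const.
  - intros x _. apply filterlim_const.
  - rewrite (sumR_ext n _ (fun k => INR (d k) * 0)) by (intros; ring).
    rewrite sumR_weights. ring.
  - ring.
Qed.

Section BoundaryValueProblem.

Context {n : nat} {d : nat -> nat} {p2 lam : R} {y y1 y2 : nat -> R -> R}.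

Context (n_gt0 : (0 < n)%nat).
Context (reg : forall i, (i < n)%nat -> C2_01 (y i) (y1 i) (y2 i)).
Context (ode : forall i r, (i < n)%nat -> I01 r ->
  - p2 * y1 i r * sumR n (fun k => INR (d k) * y1 k r) - y2 i r = p2 * lam).
Context (bc : forall i, (i < n)%nat -> y i 0 = 0 /\ y i 1 = 0).

Local Notation D := (INR (sumN n d)).
Local Notation c := (y1 0%nat 0).

Lemma diff01_component i : (i < n)%nat -> diff01 (ext01 (y i)) (y1 i).
Proof. intros Hi. apply diff01_ext01, (reg i Hi). Qed.

Lemma diff01_slope i : (i < n)%nat -> diff01 (ext01 (y1 i)) (y2 i).
Proof. intros Hi. apply diff01_ext01, (reg i Hi). Qed.

(* The differences [y1 i - y1 0] solve a homogeneous linear equation and vanish somewhere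
   by Rolle applied to [y i - y 0]. *)
Lemma slopes_agree i t : (i < n)%nat -> I01 t -> y1 i t = y1 0%nat t.
Proof.
  intros Hi Ht.
  set (w := fun t => ext01 (y1 i) t - ext01 (y1 0%nat) t).
  destruct (diff01_Rolle _ _
              (diff01_minus _ _ _ _ (diff01_component i Hi) (diff01_component 0 n_gt0)))
    as [t0 [Ht0 Hroot]].
  { rewrite !ext01_id by (apply I01_0 || apply I01_1).
    rewrite (proj1 (bc i Hi)), (proj2 (bc i Hi)), (proj1 (bc 0 n_gt0)), (proj2 (bc 0 n_gt0)).
    reflexivity. }
  enough (Hw : w t = 0) by (unfold w in Hw; rewrite !ext01_id in Hw by exact Ht; lra).
  apply (diff01_linear_ode_zero w (fun t => y2 i t - y2 0%nat t)
           (fun t => p2 * sumR n (fun k => INR (d k) * ext01 (y k) t))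
           (fun t => p2 * sumR n (fun k => INR (d k) * y1 k t)) t0).
  - apply diff01_minus; apply diff01_slope; auto.
  - apply diff01_scal, (diff01_sumR n (fun k t => INR (d k) * ext01 (y k) t)).
    intros k Hk. apply diff01_scal, diff01_component, Hk.
  - intros x Hx. assert (Hx01 : I01 x) by (unfold I01; lra).
    unfold w. rewrite !ext01_id by exact Hx01.
    pose proof (ode i x Hi Hx01). pose proof (ode 0 x n_gt0 Hx01). lra.
  - exact Ht0.
  - unfold w. rewrite !ext01_id by exact Ht0. exact Hroot.
  - exact Ht.
Qed.

Lemma components_agree i t : (i < n)%nat -> I01 t -> y i t = y 0%nat t.
Proof.
  intros Hi Ht.
  assert (Hw : diff01 (fun t => ext01 (y i) t - ext01 (y 0%nat) t) (fun _ => 0)).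
  { apply (diff01_eq _ _ _
             (diff01_minus _ _ _ _ (diff01_component i Hi) (diff01_component 0 n_gt0))).
    intros x Hx. rewrite (slopes_agree i x) by (auto; unfold I01; lra). ring. }
  pose proof (diff01_deriv0_eq _ t 0 Hw Ht I01_0) as Heq; cbv beta in Heq.
  rewrite !ext01_id in Heq by (exact Ht || exact I01_0).
  rewrite (proj1 (bc i Hi)), (proj1 (bc 0 n_gt0)) in Heq. lra.
Qed.

Lemma weighted_slope t : I01 t -> sumR n (fun k => INR (d k) * y1 k t) = D * y1 0%nat t.
Proof.
  intros Ht. rewrite <- sumR_weights. apply sumR_ext.
  intros k Hk. rewrite (slopes_agree k t) by auto. reflexivity.
Qed.

Lemma boundary_sum :
  sumR n (fun i => INR (d i) * (- y1 i 0 * sumR n (fun k => INR (d k) * y1 k 0) + y1 i 0 ^ 2))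
  = - D * (D - 1) * c ^ 2.
Proof.
  rewrite (weighted_slope 0 I01_0).
  rewrite (sumR_ext _ _ (fun i => INR (d i) * (- c * (D * c) + c ^ 2))).
  - rewrite sumR_weights. ring.
  - intros k Hk. rewrite (slopes_agree k 0 Hk I01_0). reflexivity.
Qed.

Context (p2_lam : p2 * lam = - p2 * D * c ^ 2).

(* Now [y1 0 - c] solves a linear equation with coefficient [p2 D (y1 0 + c)]. *)
Lemma slope_const t : I01 t -> y1 0%nat t = c.
Proof.
  intros Ht.
  enough (Hw : ext01 (y1 0%nat) t - c = 0) by (rewrite ext01_id in Hw by exact Ht; lra).
  apply (diff01_linear_ode_zero (fun t => ext01 (y1 0%nat) t - c) (fun t => y2 0%nat t - 0)
           (fun t => p2 * D * (ext01 (y 0%nat) t + c * t))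
           (fun t => p2 * D * (y1 0%nat t + c * 1)) 0); auto using I01_0.
  - apply diff01_minus; [apply diff01_slope, n_gt0 | apply diff01_const].
  - apply diff01_scal, diff01_plus; [apply diff01_component, n_gt0 |].
    apply diff01_scal, diff01_id.
  - intros x Hx. rewrite ext01_id by (unfold I01; lra).
    pose proof (ode 0 x n_gt0 ltac:(unfold I01; lra)) as Hx'.
    rewrite weighted_slope in Hx' by (unfold I01; lra).
    nra.
  - rewrite ext01_id by exact I01_0. ring.
Qed.

Lemma first_component_linear t : I01 t -> y 0%nat t = c * t.
Proof.
  intros Ht.
  assert (Hw : diff01 (fun t => ext01 (y 0%nat) t - c * t) (fun _ => 0)).
  { apply (diff01_eq _ _ _ (diff01_minus _ _ _ _ (diff01_component 0 n_gt0)
                                                 (diff01_scal c _ _ diff01_id))).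
    intros x Hx. rewrite slope_const by (unfold I01; lra). ring. }
  pose proof (diff01_deriv0_eq _ t 0 Hw Ht I01_0) as Heq; cbv beta in Heq.
  rewrite !ext01_id, (proj1 (bc 0 n_gt0)) in Heq by auto using I01_0. lra.
Qed.

Lemma initial_slope_zero : c = 0.
Proof.
  pose proof (first_component_linear 1 I01_1) as H1.
  rewrite (proj2 (bc 0 n_gt0)) in H1. lra.
Qed.

End BoundaryValueProblem.

Theorem lemma4p2 (n : nat) (d : nat -> nat)
  (hd : forall i, (i < n)%nat -> (0 < d i)%nat)
  (hsum : (2 <= sumN n d)%nat)
  (p1 p2 : R)
  (hp : (exists s, 0 <= s <= 1 /\ p1 = s /\ p2 = 0) \/
        (exists s, 0 < s <= 1 /\ p1 = 1 /\ p2 = s)) :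
  is_solution n d p1 p2 0 (fun _ _ => 0) /\
  (forall (lam : R) (y : nat -> R -> R),
     is_solution n d p1 p2 lam y ->
     lam = 0 /\ (forall i r, (i < n)%nat -> I01 r -> y i r = 0)).
Proof.
  split; [apply zero_is_solution |].
  intros lam y [y1 [y2 [reg [first [ode bc]]]]].
  assert (n_gt0 : (0 < n)%nat) by (destruct n; [cbv in hsum; lia | lia]).
  assert (HD : 2 <= INR (sumN n d)) by (apply le_INR in hsum; simpl in hsum; lra).
  rewrite (boundary_sum n_gt0 reg ode bc) in first.
  assert (Hlam : lam = - p1 * INR (sumN n d) * y1 0%nat 0 ^ 2).
  { apply Rmult_eq_reg_l with (INR (sumN n d) - 1); [rewrite <- first; ring | lra]. }
  assert (Hp2 : p2 * lam = - p2 * INR (sumN n d) * y1 0%nat 0 ^ 2).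
  { rewrite Hlam. destruct hp as [[s [_ [-> ->]]] | [s [_ [-> ->]]]]; ring. }
  pose proof (initial_slope_zero n_gt0 reg ode bc Hp2) as Hc.
  split; [rewrite Hlam, Hc; ring |].
  intros i r Hi Hr.
  rewrite (components_agree n_gt0 reg ode bc i r Hi Hr),
    (first_component_linear n_gt0 reg ode bc Hp2 r Hr), Hc.
  ring.
Qed.
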